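(* Let $f(z)=e^z$ and $U=\mathbb{C}\setminus[0,\infty)$. Then $\|\mathrm{D} f(\zeta)\|_U^U>1$ for all $\zeta\in f^{-1}(U)$. Moreover, if $(\zeta_n)$ is a sequence in $f^{-1}(U)$ with $\|\mathrm{D} f(\zeta_n)\|_U^U\to 1$ as $n\to\infty$, then $\min\bigl(|\zeta_n|,\mathrm{Arg}(\zeta_n)\bigr)\to 0$ as $n\to\infty$.
   Context: The hyperbolic metric on $U=\mathbb{C}\setminus[0,\infty)$ has density $\rho_U(z)=\dfrac{1}{2|z|\sin(\arg(z)/2)}$, where $\arg(z)\in(0,2\pi)$. For $\zeta\in f^{-1}(U)$ the hyperbolic derivative is $\|\mathrm{D} f(\zeta)\|_U^U = |f'(\zeta)|\cdot \rho_U(f(\zeta))/\rho_U(\zeta)$. $\mathrm{Arg}(z)\in(-\pi,\pi]$ denotes the principal argument. *)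

(* complex numbers are modelled as pairs (Re, Im) of Stdlib reals. *)
From Stdlib Require Import Reals.
Open Scope R_scope.

Definition Cpx : Type := (R * R)%type.

Definition Cnorm (z : Cpx) : R := sqrt (fst z ^ 2 + snd z ^ 2).

Definition Cexp (z : Cpx) : Cpx :=
  (exp (fst z) * cos (snd z), exp (fst z) * sin (snd z)).

(* principal argument Arg z in (-pi, pi] (standard atan2); Arg 0 := 0 by convention *)
Definition Arg (z : Cpx) : R :=
  let a := fst z in let b := snd z in
  if Rlt_dec 0 a then atan (b / a)
  else if Rlt_dec a 0 then
    (if Rle_dec 0 b then atan (b / a) + PI else atan (b / a) - PI)
  else if Rlt_dec 0 b then PI / 2
  else if Rlt_dec b 0 then - (PI / 2)
  else 0.

Definition in_U (z : Cpx) : Prop := ~ (snd z = 0 /\ 0 <= fst z).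

(* arg z in (0, 2 pi), for z in U *)
Definition arg02 (z : Cpx) : R :=
  if Rlt_dec 0 (Arg z) then Arg z else Arg z + 2 * PI.

(* hyperbolic density of U *)
Definition rho_U (z : Cpx) : R := 1 / (2 * Cnorm z * sin (arg02 z / 2)).

(* hyperbolic derivative ||D f(zeta)||_U^U of f = exp; f' = exp so |f'(zeta)| = |e^zeta| *)
Definition hypDerivExp (zeta : Cpx) : R :=
  Cnorm (Cexp zeta) * rho_U (Cexp zeta) / rho_U zeta.

(* Write r = |zeta|, x = Re zeta, y = Im zeta and w = e^zeta.  Since
   2 |z| sin^2 (arg z / 2) = |z| - Re z, the definition of the hyperbolic
   derivative collapses to  ||Df(zeta)||^2 (1 - cos y) = r (r - x).
   Now 1 - cos y < y^2 / 2 = (r - x)(r + x) / 2 <= r (r - x), which gives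
   ||Df|| > 1.  If ||Df(zeta_n)|| -> 1, the same chain read backwards forces
   2 r_n <= (1 + o(1)) (r_n + x_n), so zeta_n approaches the positive real
   axis and in fact Arg zeta_n -> 0, which is stronger than the claim. *)

From Stdlib Require Import Reals Lra Psatz.
Open Scope R_scope.

Lemma sin_sqr_lt t : t <> 0 -> sin t ^ 2 < t ^ 2.
Proof.
  assert (Hpos : forall u, 0 < u -> sin u ^ 2 < u ^ 2).
  { intros u Hu. pose proof (sin_lt_x u Hu). pose proof (SIN_bound u).
    destruct (Rle_lt_dec u 1).
    - assert (0 < sin u) by (apply sin_gt_0; pose proof PI2_1; lra). nra.
    - nra. }
  intro Ht. destruct (Rlt_or_le 0 t).
  - now apply Hpos.
  - pose proof (Hpos (- t) ltac:(lra)) as Hneg. rewrite sin_neg in Hneg. nra.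
Qed.

Lemma one_minus_cos_lt y : y <> 0 -> 1 - cos y < y ^ 2 / 2.
Proof.
  intro Hy. replace y with (2 * (y / 2)) at 1 by field.
  rewrite cos_2a_sin. pose proof (sin_sqr_lt (y / 2) ltac:(lra)). nra.
Qed.

Lemma Rabs_atan_lt e u : 0 < e < PI / 2 -> Rabs u < tan e -> Rabs (atan u) < e.
Proof.
  intros He Hu. apply Rabs_def2 in Hu as [Hlt Hgt].
  assert (Hatan : atan (tan e) = e) by (apply atan_tan; lra).
  apply atan_increasing in Hlt. apply atan_increasing in Hgt.
  rewrite atan_opp, Hatan in Hgt. rewrite Hatan in Hlt.
  apply Rabs_def1; lra.
Qed.

Lemma Cnorm_sqr z : Cnorm z ^ 2 = fst z ^ 2 + snd z ^ 2.
Proof. unfold Cnorm. apply pow2_sqrt. nra. Qed.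

Lemma Cnorm_ge0 z : 0 <= Cnorm z.
Proof. apply sqrt_pos. Qed.

Lemma Cnorm_pos z : in_U z -> 0 < Cnorm z.
Proof.
  destruct z as [x y]; unfold in_U, Cnorm; simpl; intro HU.
  apply sqrt_lt_R0. destruct (Req_dec y 0) as [->|]; [|nra].
  assert (x < 0) by (destruct (Rle_dec 0 x); [exfalso; auto | lra]). nra.
Qed.

Lemma Cnorm_Cexp zeta : Cnorm (Cexp zeta) = exp (fst zeta).
Proof.
  unfold Cnorm, Cexp; simpl. apply sqrt_lem_1; [nra | left; apply exp_pos |].
  pose proof (sin2_cos2 (snd zeta)) as H. unfold Rsqr in H. nra.
Qed.

Lemma Im_neq0_of_in_U_Cexp zeta : in_U (Cexp zeta) -> snd zeta <> 0.
Proof.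
  unfold in_U, Cexp; simpl; intros HU E. apply HU.
  rewrite E, sin_0, cos_0. pose proof (exp_pos (fst zeta)). split; [ring | lra].
Qed.

Lemma in_U_of_in_U_Cexp zeta : in_U (Cexp zeta) -> in_U zeta.
Proof. intros HU [E _]. exact (Im_neq0_of_in_U_Cexp zeta HU E). Qed.

Lemma Cnorm_cos_atan x y : x <> 0 -> Cnorm (x, y) * cos (atan (y / x)) = Rabs x.
Proof.
  intro Hx. rewrite cos_atan. set (s := 1 + (y / x)²).
  assert (Hs : 0 < sqrt s) by (apply sqrt_lt_R0; pose proof (Rle_0_sqr (y / x)); unfold s; lra).
  assert (Hsplit : x ^ 2 + y ^ 2 = x ^ 2 * s) by (unfold s, Rsqr; field; exact Hx).
  unfold Cnorm; cbn [fst snd]. rewrite Hsplit, sqrt_mult_alt by apply pow2_ge_0.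
  rewrite <- pow2_abs, sqrt_pow2 by apply Rabs_pos. field. lra.
Qed.

Lemma Cnorm_cos_Arg z : in_U z -> Cnorm z * cos (Arg z) = fst z.
Proof.
  destruct z as [x y]; unfold in_U, Arg; simpl; intro HU.
  destruct (Rlt_dec 0 x).
  - rewrite Cnorm_cos_atan by lra. apply Rabs_pos_eq; lra.
  - destruct (Rlt_dec x 0).
    + assert (Hneg : - Cnorm (x, y) * cos (atan (y / x)) = x)
        by (rewrite Ropp_mult_distr_l_reverse, Cnorm_cos_atan, Rabs_left; lra).
      destruct (Rle_dec 0 y).
      * rewrite neg_cos. lra.
      * rewrite cos_minus, cos_PI, sin_PI. lra.
    + replace x with 0 by lra.
      destruct (Rlt_dec 0 y); [rewrite cos_PI2; ring |].
      destruct (Rlt_dec y 0); [rewrite cos_neg, cos_PI2; ring |].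
      exfalso. apply HU. lra.
Qed.

Lemma Arg_bound z : in_U z -> - PI < Arg z <= PI /\ Arg z <> 0.
Proof.
  destruct z as [x y]; unfold in_U, Arg; simpl; intro HU.
  pose proof PI_RGT_0. pose proof (atan_bound (y / x)).
  destruct (Rlt_dec 0 x).
  - split; [lra |]. intro E. apply atan_eq0 in E. apply HU. split; [| lra].
    replace y with (y / x * x) by (field; lra). rewrite E. ring.
  - destruct (Rlt_dec x 0).
    + destruct (Rle_dec 0 y).
      * assert (atan (y / x) <= 0).
        { rewrite <- atan_0. destruct (Req_dec y 0) as [->|].
          - unfold Rdiv. rewrite Rmult_0_l. lra.
          - left. apply atan_increasing. apply Rdiv_pos_neg; lra. }
        lra.
      * assert (0 < atan (y / x)).
        { rewrite <- atan_0. apply atan_increasing.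
          replace (y / x) with (- y / - x) by (field; lra). apply Rdiv_lt_0_compat; lra. }
        lra.
    + destruct (Rlt_dec 0 y); [lra |].
      destruct (Rlt_dec y 0); [lra |].
      exfalso. apply HU. lra.
Qed.

Lemma sin_half_arg02 z : in_U z ->
  0 < sin (arg02 z / 2) /\ 2 * Cnorm z * sin (arg02 z / 2) ^ 2 = Cnorm z - fst z.
Proof.
  intro HU. pose proof (Arg_bound z HU) as [[Hlo Hhi] Hne0]. pose proof PI_RGT_0.
  assert (Harg : 0 < arg02 z < 2 * PI /\ cos (arg02 z) = cos (Arg z)).
  { unfold arg02. destruct (Rlt_dec 0 (Arg z)); [lra |].
    split; [lra |]. rewrite cos_plus, cos_2PI, sin_2PI. ring. }
  destruct Harg as [Hrange Hcos].
  split; [apply sin_gt_0; lra |].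
  assert (Hhalf : cos (arg02 z) = 1 - 2 * sin (arg02 z / 2) * sin (arg02 z / 2))
    by (rewrite <- cos_2a_sin; f_equal; field).
  rewrite <- (Cnorm_cos_Arg z HU), <- Hcos, Hhalf. ring.
Qed.

Lemma hypDerivExp_sqr zeta : in_U (Cexp zeta) ->
  0 < hypDerivExp zeta /\
  hypDerivExp zeta ^ 2 * (1 - cos (snd zeta)) = Cnorm zeta * (Cnorm zeta - fst zeta).
Proof.
  intro HU. pose proof (in_U_of_in_U_Cexp zeta HU) as HUz.
  destruct (sin_half_arg02 _ HU) as [Hsw Hw]. destruct (sin_half_arg02 _ HUz) as [Hsz Hz].
  pose proof (Cnorm_pos _ HUz) as Hr. pose proof (exp_pos (fst zeta)) as Hexp.
  rewrite Cnorm_Cexp in Hw. change (fst (Cexp zeta)) with (exp (fst zeta) * cos (snd zeta)) in Hw.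
  assert (Hh : hypDerivExp zeta
               = Cnorm zeta * sin (arg02 zeta / 2) / sin (arg02 (Cexp zeta) / 2)).
  { unfold hypDerivExp, rho_U. rewrite Cnorm_Cexp. field. repeat split; lra. }
  assert (Hw' : 2 * sin (arg02 (Cexp zeta) / 2) ^ 2 = 1 - cos (snd zeta)).
  { apply (Rmult_eq_reg_l (exp (fst zeta))); lra. }
  split.
  - rewrite Hh. apply Rdiv_lt_0_compat; nra.
  - rewrite Hh, <- Hw', <- Hz. field. lra.
Qed.

Section RealRelation.

Variables r x y h : R.
Hypothesis r_ge0 : 0 <= r.
Hypothesis r_sqr : r ^ 2 = x ^ 2 + y ^ 2.
Hypothesis y_neq0 : y <> 0.
Hypothesis h_pos : 0 < h.
Hypothesis h_sqr : h ^ 2 * (1 - cos y) = r * (r - x).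

Let y_sqr_pos : 0 < y ^ 2.
Proof. pose proof (Rsqr_pos_lt y y_neq0). rewrite Rsqr_pow2 in *. lra. Qed.

Let r_minus_x_pos : 0 < r - x.
Proof. pose proof y_sqr_pos. nra. Qed.

Lemma one_lt_h : 1 < h.
Proof.
  pose proof y_sqr_pos. pose proof r_minus_x_pos. pose proof (one_minus_cos_lt y y_neq0).
  assert (Hgap : r * (r - x) - y ^ 2 / 2 = (r - x) ^ 2 / 2) by nra.
  assert (Hcos : 1 - cos y < h ^ 2 * (1 - cos y)) by nra.
  assert (0 < 1 - cos y) by nra.
  assert (1 < h ^ 2) by nra.
  nra.
Qed.

Lemma two_r_lt_h_sqr_mul : 2 * r < h ^ 2 * (r + x).
Proof.
  pose proof r_minus_x_pos. pose proof (one_minus_cos_lt y y_neq0).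
  assert (Hy : y ^ 2 = (r - x) * (r + x)) by nra.
  assert (Hlt : h ^ 2 * (1 - cos y) < h ^ 2 * (y ^ 2 / 2))
    by (apply Rmult_lt_compat_l; [apply pow_lt |]; assumption).
  rewrite h_sqr, Hy in Hlt. nra.
Qed.

Lemma near_positive_axis d : 0 < d <= 1 / 2 -> h ^ 2 < 1 + d ->
  0 < x /\ y ^ 2 < 16 * d * x ^ 2.
Proof.
  intros Hd Hh. pose proof y_sqr_pos. pose proof r_minus_x_pos. pose proof two_r_lt_h_sqr_mul.
  assert (Hrx : 0 < r + x) by nra.
  assert (Hx : r * (1 - d) < x * (1 + d)).
  { assert (h ^ 2 * (r + x) < (1 + d) * (r + x)) by (apply Rmult_lt_compat_r; assumption).
    lra. }
  assert (Hsq : (r * (1 - d)) ^ 2 < (x * (1 + d)) ^ 2)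
    by (assert (0 <= r * (1 - d)) by (apply Rmult_le_pos; lra); nra).
  split; [nra |].
  assert (Hy : (1 - d) ^ 2 * y ^ 2 < 4 * d * x ^ 2).
  { replace (y ^ 2) with (r ^ 2 - x ^ 2) by lra.
    replace ((1 - d) ^ 2 * (r ^ 2 - x ^ 2))
      with ((r * (1 - d)) ^ 2 - (x * (1 + d)) ^ 2 + 4 * d * x ^ 2) by ring.
    lra. }
  assert (Hd2 : 1 / 4 <= (1 - d) ^ 2) by nra.
  assert (y ^ 2 / 4 <= (1 - d) ^ 2 * y ^ 2)
    by (rewrite Rmult_comm; apply Rmult_le_compat_l; lra).
  lra.
Qed.

End RealRelation.

Lemma hypDerivExp_gt_1 zeta : in_U (Cexp zeta) -> hypDerivExp zeta > 1.
Proof.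
  intro HU. destruct (hypDerivExp_sqr zeta HU).
  apply (one_lt_h (Cnorm zeta) (fst zeta) (snd zeta));
    auto using Cnorm_ge0, Cnorm_sqr, Im_neq0_of_in_U_Cexp.
Qed.

Lemma Rabs_Arg_lt zeta e : in_U (Cexp zeta) -> 0 < e < PI / 2 ->
  hypDerivExp zeta ^ 2 < 1 + Rmin (1 / 2) (tan e ^ 2 / 16) -> Rabs (Arg zeta) < e.
Proof.
  intros HU He Hh. destruct (hypDerivExp_sqr zeta HU) as [Hpos Hrel].
  assert (Ht : 0 < tan e) by (apply tan_gt_0; lra).
  set (d := Rmin (1 / 2) (tan e ^ 2 / 16)) in Hh.
  assert (Hd : 0 < d <= 1 / 2 /\ 16 * d <= tan e ^ 2)
    by (unfold d, Rmin; destruct (Rle_dec (1 / 2) (tan e ^ 2 / 16)); nra).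
  destruct (near_positive_axis (Cnorm zeta) (fst zeta) (snd zeta) (hypDerivExp zeta)
              (Cnorm_ge0 _) (Cnorm_sqr _) (Im_neq0_of_in_U_Cexp _ HU) Hpos Hrel d)
    as [Hx Hy]; [lra | lra |].
  assert (Hyx : Rabs (snd zeta) < tan e * fst zeta).
  { rewrite <- (Rabs_pos_eq (tan e * fst zeta)) by nra. apply Rsqr_lt_abs_0.
    rewrite !Rsqr_pow2. nra. }
  assert (Hq : Rabs (snd zeta / fst zeta) < tan e).
  { unfold Rdiv. rewrite Rabs_mult, Rabs_inv, (Rabs_pos_eq (fst zeta)) by lra.
    apply (Rmult_lt_reg_r (fst zeta)); [lra |].
    rewrite Rmult_assoc, Rinv_l by lra. lra. }
  unfold Arg. destruct (Rlt_dec 0 (fst zeta)); [| lra].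
  exact (Rabs_atan_lt e _ He Hq).
Qed.

Lemma Arg_cv_0 (zs : nat -> Cpx) :
  (forall n, in_U (Cexp (zs n))) ->
  Un_cv (fun n => hypDerivExp (zs n)) 1 -> Un_cv (fun n => Arg (zs n)) 0.
Proof.
  intros HU Hcv eps Heps.
  set (e := Rmin eps 1).
  assert (He : 0 < e <= eps /\ e < PI / 2)
    by (pose proof PI2_1; unfold e, Rmin; destruct (Rle_dec eps 1); lra).
  set (d := Rmin (1 / 2) (tan e ^ 2 / 16)).
  assert (Hd : 0 < d <= 1 / 2).
  { pose proof (tan_gt_0 e ltac:(lra) ltac:(lra)).
    unfold d, Rmin; destruct (Rle_dec (1 / 2) (tan e ^ 2 / 16)); nra. }
  destruct (Hcv (d / 3)) as [N HN]; [lra |].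
  exists N. intros n Hn. specialize (HN n Hn). unfold R_dist in *.
  apply Rabs_def2 in HN. pose proof (proj1 (hypDerivExp_sqr (zs n) (HU n))).
  rewrite Rminus_0_r.
  assert (Hh : hypDerivExp (zs n) ^ 2 < 1 + d) by nra.
  pose proof (Rabs_Arg_lt (zs n) e (HU n) ltac:(lra) Hh). lra.
Qed.

Lemma Un_cv_Rmin_0 (a b : nat -> R) :
  (forall n, 0 < a n) -> Un_cv b 0 -> Un_cv (fun n => Rmin (a n) (b n)) 0.
Proof.
  intros Ha Hb eps Heps. destruct (Hb eps Heps) as [N HN].
  exists N. intros n Hn. specialize (HN n Hn). specialize (Ha n). unfold R_dist in *.
  rewrite Rminus_0_r in *. apply Rle_lt_trans with (2 := HN).
  unfold Rmin. destruct (Rle_dec (a n) (b n)); [| lra].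
  rewrite !Rabs_pos_eq; lra.
Qed.

Theorem mainTheorem4 :
  (forall zeta : Cpx, in_U (Cexp zeta) -> hypDerivExp zeta > 1) /\
  (forall zs : nat -> Cpx,
     (forall n, in_U (Cexp (zs n))) ->
     Un_cv (fun n => hypDerivExp (zs n)) 1 ->
     Un_cv (fun n => Rmin (Cnorm (zs n)) (Arg (zs n))) 0).
Proof.
  split.
  - exact hypDerivExp_gt_1.
  - intros zs HU Hcv. apply Un_cv_Rmin_0.
    + intro n. apply Cnorm_pos, in_U_of_in_U_Cexp, HU.
    + exact (Arg_cv_0 zs HU Hcv).
Qed.
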